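(* Along the boundary curve $x=x_{\rm splg}(h)$, $$\lim_{h\to\infty}\frac{c^*(x_{\rm splg}(h),h)}{x_{\rm splg}(h)}=r,\qquad \lim_{h\to\infty}\pi^*(x_{\rm splg}(h),h)=\frac{(\mu-r)(1-\lambda)^{r_1-1}}{r\beta\sigma^2}.$$
   Context: Parameters $r>0$, $\mu>r$, $\sigma>0$, $\beta>0$, $\lambda\in(0,1)$, $\kappa=(\mu-r)/\sigma$, $r_{1,2}=\frac12(1\pm\sqrt{1+8r/\kappa^2})$. Define $C_6(h):=\frac{(1-\lambda)^{r_1-r_2}}{(r_1-r_2)\beta r}\Big[\frac{1}{1-r_2}e^{(\lambda-1)(1-r_2)\beta h}-\frac{\lambda}{\lambda(1-r_2)-(r_1-r_2)}e^{[\lambda(1-r_2)-(r_1-r_2)]\beta h}\Big]$ and $C_5(h):=\frac{(1-r_2)\kappa^2}{2(r_1-r_2)\beta r^2}[e^{(\lambda-1)(1-r_1)\beta h}-e^{\lambda(1-r_1)\beta h}]$, and $x_{\rm splg}(h):=-r_1C_5(h)(1-\lambda)^{r_1-1}e^{(\lambda-1)(r_1-1)\beta h}-r_2C_6(h)(1-\lambda)^{r_2-1}e^{(\lambda-1)(r_2-1)\beta h}+\frac hr$. On this curve the optimal feedback consumption is $c^*(x_{\rm splg}(h),h)=h$ and the optimal feedback portfolio is $\pi^*(x_{\rm splg}(h),h)=\frac{\mu-r}{\sigma^2}\big[\frac{2r}{\kappa^2}C_5(h)y^{r_1-1}+\frac{2r}{\kappa^2}C_6(h)y^{r_2-1}\big]$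 with $y=(1-\lambda)e^{(\lambda-1)\beta h}$ (these are the optimal controls of the problem $\sup\mathbb E[\int_0^\infty e^{-rt}(-\frac1\beta e^{-\beta(c_t-\lambda H_t)})dt]$ with $H_t$ the running maximum of consumption, wealth $dX=rXdt+\pi(\mu-r)dt+\pi\sigma dW-cdt$). *)

From Stdlib Require Import Reals.
From Coquelicot Require Import Coquelicot.
Open Scope R_scope.

Definition kappa (r mu sigma : R) : R := (mu - r) / sigma.

Definition r1 (r mu sigma : R) : R :=
  / 2 * (1 + sqrt (1 + 8 * r / (kappa r mu sigma) ^ 2)).
Definition r2 (r mu sigma : R) : R :=
  / 2 * (1 - sqrt (1 + 8 * r / (kappa r mu sigma) ^ 2)).

Definition C6 (r mu sigma beta lambda h : R) : R :=
  let a := r1 r mu sigma in let b := r2 r mu sigma in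
  Rpower (1 - lambda) (a - b) / ((a - b) * beta * r) *
  ( / (1 - b) * exp ((lambda - 1) * (1 - b) * beta * h)
    - lambda / (lambda * (1 - b) - (a - b))
      * exp ((lambda * (1 - b) - (a - b)) * beta * h)).

Definition C5 (r mu sigma beta lambda h : R) : R :=
  let a := r1 r mu sigma in let b := r2 r mu sigma in
  let k := kappa r mu sigma in
  (1 - b) * k ^ 2 / (2 * (a - b) * beta * r ^ 2) *
  (exp ((lambda - 1) * (1 - a) * beta * h) - exp (lambda * (1 - a) * beta * h)).

Definition x_splg (r mu sigma beta lambda h : R) : R :=
  let a := r1 r mu sigma in let b := r2 r mu sigma in
  - a * C5 r mu sigma beta lambda h * Rpower (1 - lambda) (a - 1)
      * exp ((lambda - 1) * (a - 1) * beta * h)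
  - b * C6 r mu sigma beta lambda h * Rpower (1 - lambda) (b - 1)
      * exp ((lambda - 1) * (b - 1) * beta * h)
  + h / r.

Definition y_splg (beta lambda h : R) : R :=
  (1 - lambda) * exp ((lambda - 1) * beta * h).

(* optimal consumption on the curve: c*(x_splg(h), h) = h *)
Definition c_splg (h : R) : R := h.

Definition pi_splg (r mu sigma beta lambda h : R) : R :=
  let a := r1 r mu sigma in let b := r2 r mu sigma in
  let k := kappa r mu sigma in
  let y := y_splg beta lambda h in
  (mu - r) / sigma ^ 2 *
  (2 * r / k ^ 2 * C5 r mu sigma beta lambda h * Rpower y (a - 1)
   + 2 * r / k ^ 2 * C6 r mu sigma beta lambda h * Rpower y (b - 1)).

(* Write a = r1, b = r2 for the roots of  k^2/2 z^2 - k^2/2 z - r = 0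
   (k = kappa), so that a + b = 1, a b k^2 = -2 r, a > 1 and b < 0, and put
   c = (1 - a) beta < 0.  Multiplying C5(h) and C6(h) by the exponential
   factors exp((lambda-1)(a-1) beta h), exp((lambda-1)(b-1) beta h) with
   which they appear in x_splg and pi_splg cancels all growth in h and
   leaves affine functions of exp(c h).  Hence
     x_splg(h)  = A + B exp(c h) + h / r,
     pi_splg(h) = L + F exp(c h),
   for constants A, B, F, where L is the claimed limit of the portfolio
   (identifying L is the algebraic identity [portfolio_limit_identity]).
   Both limits then follow from two elementary facts: exp(c h) -> 0 and
   h / (A + B exp(c h) + h / r) -> r as h -> +oo. *)

From Stdlib Require Import Reals Lra.
From Coquelicot Require Import Coquelicot.
Open Scope R_scope.

Lemma is_lim_exp_neg (c : R) : c < 0 -> is_lim (fun h => exp (c * h)) p_infty 0.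
Proof.
  intro Hc.
  apply (is_lim_comp exp (fun h => c * h) p_infty 0 m_infty).
  - exact is_lim_exp_m.
  - pose proof (is_lim_mult (fun _ => c) (fun h => h) p_infty c p_infty
                   (is_lim_const c p_infty) (is_lim_id p_infty)) as Hlin.
    assert (Hsign : Rbar_mult (Finite c) p_infty = m_infty).
    { simpl. destruct (Rle_dec 0 c); [exfalso; lra | reflexivity]. }
    rewrite Hsign in Hlin. apply Hlin. simpl. lra.
  - exists 0. intros; discriminate.
Qed.

Lemma is_lim_affine_exp (A B c : R) :
  c < 0 -> is_lim (fun h => A + B * exp (c * h)) p_infty A.
Proof.
  intro Hc.
  replace (Finite A) with (Finite (A + B * 0)) by (f_equal; ring).
  apply (is_lim_plus _ _ p_infty A (B * 0)); [apply is_lim_const | | reflexivity].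
  apply (is_lim_mult (fun _ => B) _ p_infty B 0);
    [apply is_lim_const | apply is_lim_exp_neg; exact Hc | exact I].
Qed.

Lemma is_lim_ratio_linear (r A B c : R) : 0 < r -> c < 0 ->
  is_lim (fun h => h / (A + B * exp (c * h) + h / r)) p_infty r.
Proof.
  intros Hr Hc.
  apply is_lim_ext_loc with (fun h => / ((A + B * exp (c * h)) * / h + / r)).
  { exists 0. intros h Hh.
    replace ((A + B * exp (c * h)) * / h + / r)
      with ((A + B * exp (c * h) + h / r) * / h) by (field; lra).
    rewrite Rinv_mult, Rinv_inv. unfold Rdiv. ring. }
  replace (Finite r) with (Rbar_inv (Finite (/ r))) by (simpl; f_equal; apply Rinv_inv).
  apply is_lim_inv; [| intro E; injection E; apply Rinv_neq_0_compat; lra].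
  replace (Finite (/ r)) with (Finite (A * 0 + / r)) by (f_equal; ring).
  apply (is_lim_plus _ _ p_infty (A * 0) (/ r)); [| apply is_lim_const | reflexivity].
  apply (is_lim_mult _ (fun h => / h) p_infty A 0);
    [apply is_lim_affine_exp; exact Hc | | exact I].
  replace (Finite 0) with (Rbar_inv p_infty) by reflexivity.
  apply is_lim_inv; [apply is_lim_id | discriminate].
Qed.

Lemma r1_add_r2 (r mu sigma : R) : r1 r mu sigma + r2 r mu sigma = 1.
Proof. unfold r1, r2. field. Qed.

Section Roots.
Variables r mu sigma : R.
Hypotheses (Hr : 0 < r) (Hmu : r < mu) (Hsigma : 0 < sigma).

Lemma kappa_pos : 0 < kappa r mu sigma.
Proof. unfold kappa. apply Rdiv_lt_0_compat; lra. Qed.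

Lemma discriminant_gt_1 : 1 < 1 + 8 * r / kappa r mu sigma ^ 2.
Proof.
  assert (0 < 8 * r / kappa r mu sigma ^ 2);
    [apply Rdiv_lt_0_compat; [lra | apply pow_lt, kappa_pos] | lra].
Qed.

Lemma sqrt_discriminant_gt_1 : 1 < sqrt (1 + 8 * r / kappa r mu sigma ^ 2).
Proof.
  pose proof discriminant_gt_1.
  rewrite <- sqrt_1 at 1. apply sqrt_lt_1_alt. lra.
Qed.

Lemma r1_gt_1 : 1 < r1 r mu sigma.
Proof. pose proof sqrt_discriminant_gt_1. unfold r1. lra. Qed.

Lemma r2_lt_0 : r2 r mu sigma < 0.
Proof. pose proof sqrt_discriminant_gt_1. unfold r2. lra. Qed.

Lemma r1_mul_r2 : r1 r mu sigma * r2 r mu sigma * kappa r mu sigma ^ 2 = -2 * r.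
Proof.
  pose proof kappa_pos as Hk.
  set (s := 1 + 8 * r / kappa r mu sigma ^ 2).
  assert (Hsq : sqrt s * sqrt s = s).
  { apply sqrt_sqrt. unfold s. pose proof discriminant_gt_1. lra. }
  unfold r1, r2. fold s.
  replace (/ 2 * (1 + sqrt s) * (/ 2 * (1 - sqrt s))) with (/ 4 * (1 - sqrt s * sqrt s))
    by field.
  rewrite Hsq. unfold s. field. lra.
Qed.

End Roots.

Lemma exp_sum_zero (u v : R) : u + v = 0 -> exp u * exp v = 1.
Proof. intro H. rewrite <- exp_plus, H. apply exp_0. Qed.

(* The common exponential rate c = (1 - r1) beta < 0 of all transient terms. *)
Definition decay_rate (r mu sigma beta : R) : R := (1 - r1 r mu sigma) * beta.

Lemma decay_rate_neg (r mu sigma beta : R) :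
  0 < r -> r < mu -> 0 < sigma -> 0 < beta -> decay_rate r mu sigma beta < 0.
Proof.
  intros Hr Hmu Hsigma Hbeta. unfold decay_rate.
  assert (1 < r1 r mu sigma) by (apply r1_gt_1; assumption). nra.
Qed.

Lemma C5_normalised (r mu sigma beta lambda h : R) :
  let a := r1 r mu sigma in let b := r2 r mu sigma in let k := kappa r mu sigma in
  C5 r mu sigma beta lambda h * exp ((lambda - 1) * (a - 1) * beta * h)
  = (1 - b) * k ^ 2 / (2 * (a - b) * beta * r ^ 2)
    * (1 - exp (decay_rate r mu sigma beta * h)).
Proof.
  intros a b k. unfold C5, decay_rate. fold a b k.
  rewrite Rmult_assoc. f_equal.
  rewrite (Rmult_minus_distr_r (exp _) (exp _)). f_equal.
  - apply exp_sum_zero. ring.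
  - rewrite <- exp_plus. f_equal. ring.
Qed.

Lemma C6_normalised (r mu sigma beta lambda h : R) :
  let a := r1 r mu sigma in let b := r2 r mu sigma in
  C6 r mu sigma beta lambda h * exp ((lambda - 1) * (b - 1) * beta * h)
  = Rpower (1 - lambda) (a - b) / ((a - b) * beta * r)
    * (/ (1 - b) - lambda / (lambda * (1 - b) - (a - b))
                   * exp (decay_rate r mu sigma beta * h)).
Proof.
  intros a b. unfold C6, decay_rate. fold a b.
  rewrite Rmult_assoc. f_equal.
  rewrite Rmult_minus_distr_r, !(Rmult_assoc _ (exp _)). f_equal.
  - rewrite exp_sum_zero; ring.
  - rewrite <- exp_plus. do 2 f_equal. ring.
Qed.

Lemma Rpower_y_splg (beta lambda h p : R) : lambda < 1 ->
  Rpower (y_splg beta lambda h) p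
  = Rpower (1 - lambda) p * exp ((lambda - 1) * p * beta * h).
Proof.
  intro Hl. unfold Rpower, y_splg.
  rewrite ln_mult, ln_exp by (try apply exp_pos; lra).
  rewrite <- exp_plus. f_equal. ring.
Qed.

Lemma x_splg_shape (r mu sigma beta lambda : R) : exists A B : R, forall h : R,
  x_splg r mu sigma beta lambda h
  = A + B * exp (decay_rate r mu sigma beta * h) + h / r.
Proof.
  set (a := r1 r mu sigma). set (b := r2 r mu sigma). set (k := kappa r mu sigma).
  set (K5 := (1 - b) * k ^ 2 / (2 * (a - b) * beta * r ^ 2)).
  set (K6 := Rpower (1 - lambda) (a - b) / ((a - b) * beta * r)).
  set (M := lambda / (lambda * (1 - b) - (a - b))).
  set (P := Rpower (1 - lambda) (a - 1)). set (Q := Rpower (1 - lambda) (b - 1)).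
  exists (- (a * P * K5 + b * Q * K6 * / (1 - b))), (a * P * K5 + b * Q * K6 * M).
  intro h. unfold x_splg. fold a b P Q.
  transitivity (- a * P * (C5 r mu sigma beta lambda h * exp ((lambda - 1) * (a - 1) * beta * h))
                - b * Q * (C6 r mu sigma beta lambda h * exp ((lambda - 1) * (b - 1) * beta * h))
                + h / r); [ring |].
  rewrite C5_normalised, C6_normalised. fold a b k K5 K6 M. ring.
Qed.

(* The coefficient identity behind the portfolio limit: with a + b = 1 and
   a b k^2 = -2 r, the two contributions add up to 1 / (beta r). *)
Lemma portfolio_limit_identity (a b k r beta : R) :
  a + b = 1 -> a * b * k ^ 2 = -2 * r -> 0 < a - b -> 0 < 1 - b ->
  0 < k -> 0 < r -> 0 < beta ->
  2 * r / k ^ 2 * ((1 - b) * k ^ 2 / (2 * (a - b) * beta * r ^ 2))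
  + 2 * r / k ^ 2 * (/ ((a - b) * beta * r) * / (1 - b))
  = / (beta * r).
Proof.
  intros Hsum Hprod Hab Hb Hk Hr Hbeta.
  assert (Hb0 : b <> 0) by (intro E; rewrite E in Hprod; lra).
  assert (Hr' : r = - (a * b * k ^ 2) / 2) by lra.
  replace b with (1 - a) in * by lra.
  rewrite Hr'. field. repeat split; lra.
Qed.

Lemma pi_splg_shape (r mu sigma beta lambda : R) :
  0 < r -> r < mu -> 0 < sigma -> 0 < beta -> lambda < 1 ->
  exists F : R, forall h : R,
  pi_splg r mu sigma beta lambda h
  = (mu - r) * Rpower (1 - lambda) (r1 r mu sigma - 1) / (r * beta * sigma ^ 2)
    + F * exp (decay_rate r mu sigma beta * h).
Proof.
  intros Hr Hmu Hsigma Hbeta Hlambda.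
  set (a := r1 r mu sigma). set (b := r2 r mu sigma). set (k := kappa r mu sigma).
  set (K5 := (1 - b) * k ^ 2 / (2 * (a - b) * beta * r ^ 2)).
  set (K6 := Rpower (1 - lambda) (a - b) / ((a - b) * beta * r)).
  set (M := lambda / (lambda * (1 - b) - (a - b))).
  set (P := Rpower (1 - lambda) (a - 1)). set (Q := Rpower (1 - lambda) (b - 1)).
  assert (Hk : 0 < k) by (apply kappa_pos; assumption).
  assert (Ha : 1 < a) by (apply r1_gt_1; assumption).
  assert (Hb : b < 0) by (apply r2_lt_0; assumption).
  assert (HQ : Q * K6 = P * (/ ((a - b) * beta * r))).
  { unfold Q, K6, P, Rdiv. rewrite <- Rmult_assoc, <- Rpower_plus.
    do 2 f_equal. ring. }
  exists ((mu - r) / sigma ^ 2 * (- (2 * r / k ^ 2 * P * K5) - 2 * r / k ^ 2 * (Q * K6) * M)).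
  intro h. unfold pi_splg. fold a b k. rewrite !Rpower_y_splg by lra. fold P Q.
  transitivity ((mu - r) / sigma ^ 2
    * (2 * r / k ^ 2 * P * (C5 r mu sigma beta lambda h * exp ((lambda - 1) * (a - 1) * beta * h))
       + 2 * r / k ^ 2 * Q * (C6 r mu sigma beta lambda h * exp ((lambda - 1) * (b - 1) * beta * h))));
    [ring |].
  rewrite C5_normalised, C6_normalised. fold a b k K5 K6 M.
  assert (Hlim : (mu - r) * P / (r * beta * sigma ^ 2)
                 = (mu - r) / sigma ^ 2 * P
                   * (2 * r / k ^ 2 * K5 + 2 * r / k ^ 2 * (/ ((a - b) * beta * r) * / (1 - b)))).
  { unfold K5. rewrite (portfolio_limit_identity a b k r beta); try lra.
    - field. lra.
    - apply r1_add_r2.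
    - apply r1_mul_r2; lra. }
  rewrite Hlim. transitivity ((mu - r) / sigma ^ 2
    * (2 * r / k ^ 2 * P * K5 + 2 * r / k ^ 2 * (Q * K6) * / (1 - b)
       - (2 * r / k ^ 2 * P * K5 + 2 * r / k ^ 2 * (Q * K6) * M)
         * exp (decay_rate r mu sigma beta * h))); [ring |].
  rewrite HQ. ring.
Qed.

Theorem corollary3p2 (r mu sigma beta lambda : R) :
  0 < r -> r < mu -> 0 < sigma -> 0 < beta -> 0 < lambda < 1 ->
  is_lim (fun h => c_splg h / x_splg r mu sigma beta lambda h) p_infty (Finite r)
  /\
  is_lim (fun h => pi_splg r mu sigma beta lambda h) p_infty
    (Finite ((mu - r) * Rpower (1 - lambda) (r1 r mu sigma - 1)
             / (r * beta * sigma ^ 2))).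
Proof.
  intros Hr Hmu Hsigma Hbeta Hlambda.
  pose proof (decay_rate_neg r mu sigma beta Hr Hmu Hsigma Hbeta) as Hdecay.
  split.
  - destruct (x_splg_shape r mu sigma beta lambda) as [A [B Hx]].
    apply is_lim_ext with (fun h => h / (A + B * exp (decay_rate r mu sigma beta * h) + h / r)).
    + intro h. rewrite Hx. reflexivity.
    + apply is_lim_ratio_linear; assumption.
  - destruct (pi_splg_shape r mu sigma beta lambda Hr Hmu Hsigma Hbeta (proj2 Hlambda)) as [F Hpi].
    eapply is_lim_ext; [intro h; symmetry; apply Hpi |].
    apply is_lim_affine_exp. exact Hdecay.
Qed.
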